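(* Let $m\geq 1$ and let $f=a_0+a_1z+\cdots+a_mz^m\in\mathbb{Z}[z]$ be a primitive polynomial with $a_m\neq 0$ such that $a_0=\pm p^kd$ for some positive integers $k,d$ and a prime $p$ with $p\nmid d$, and such that every complex zero of $f$ lies outside the closed disk $\{z\in\mathbb{C}:|z|\leq d\}$. Suppose there is an index $j$ with $1\leq j\leq m$ such that $p\nmid a_j$. Then $f$ is a product of at most $\min\{k,j\}$ irreducible polynomials in $\mathbb{Z}[z]$. In particular, if $k=1$ or $j=1$, then $f$ is irreducible in $\mathbb{Z}[z]$.
   Context: A polynomial in $\mathbb{Z}[z]$ is primitive if the greatest common divisor of its coefficients is $1$. ''$f$ is a product of at most $r$ irreducible polynomials'' means that in a factorization of $f$ into irreducible elements of $\mathbb{Z}[z]$, the number of factors (counted with multiplicity) is at most $r$. *)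

From HB Require Import structures.
From mathcomp Require Import all_boot all_order all_algebra.
From mathcomp Require Import algC.
Set Implicit Arguments. Unset Strict Implicit. Unset Printing Implicit Defensive.
Import Order.TTheory GRing.Theory Num.Theory.
Local Open Scope ring_scope.

Definition primitive_Zpoly (f : {poly int}) : Prop :=
  \big[gcdz/0]_(i < size f) f`_i = 1.

Definition irreducible_Zpoly (g : {poly int}) : Prop :=
  [/\ g != 0, g \isn't a GRing.unit &
      forall a b : {poly int}, g = a * b ->
        a \is a GRing.unit \/ b \is a GRing.unit].

Definition prod_at_most_irr (f : {poly int}) (r : nat) : Prop :=
  exists s : seq {poly int},
    [/\ (size s <= r)%N, (forall g, g \in s -> irreducible_Zpoly g) &
        f = \prod_(g <- s) g].

From HB Require Import structures.
From mathcomp Require Import all_boot all_order all_algebra.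
From mathcomp Require Import algC.
From mathcomp Require Import zify.
From Stdlib Require Import Classical.
Import Order.TTheory GRing.Theory Num.Theory.
Local Open Scope ring_scope.

(* Write f = g_1 ... g_r with every g_i a non-unit.  As f is primitive, no g_i
   is constant, and as every complex zero of g_i lies outside the disk of
   radius d, |g_i(0)| is |lead coefficient| times a product of moduli > d, so
   |g_i(0)| > d.  Since g_i(0) divides p^k d, this forces p | g_i(0).  Hence
   p^r divides f(0) = +-p^k d, giving r <= k, and the coefficients of z^0, ...,
   z^(r-1) of f are divisible by p, giving r <= j.  Bounded factorization
   lengths then yield a factorization into at most min(k, j) irreducibles. *)

Lemma norm_coef0_gt (g : {poly int}) (c : algC) :
  (1 < size g)%N -> 1 <= c ->
  (forall z, root (map_poly intr g) z -> c < `|z|) ->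
  c < `|(g`_0)%:~R : algC|.
Proof.
move=> sg c_ge1 large_roots.
set G := map_poly (intr : int -> algC) g.
have [rs defG] := closed_field_poly_normal G.
have g0 : g != 0 by rewrite -size_poly_eq0; case: (size g) sg.
have lcG : lead_coef G = (lead_coef g)%:~R := lead_coef_map_inj intr_inj (rmorph0 _) g.
have lcG0 : lead_coef G != 0 by rewrite lcG intr_eq0 lead_coef_eq0.
have rs_large z : z \in rs -> c < `|z|.
  by move=> zrs; apply: large_roots; rewrite -/G defG rootZ // root_prod_XsubC.
have szG : size G = size g := size_map_inj_poly intr_inj (rmorph0 _) g.
case: rs defG rs_large => [|z0 rs] defG rs_large.
  by move: sg; rewrite -szG defG big_nil size_scale // size_poly1.
rewrite -coef_map -/G defG coefZ coef0_prod_XsubC !normrM normrX normrN1 expr1n mul1r.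
have lc_ge1 : 1 <= `|lead_coef G|.
  rewrite lcG -intr_norm ler1z; move: g0; rewrite -lead_coef_eq0; lia.
have rs_ge1 : 1 <= \prod_(z <- rs) `|z|.
  rewrite big_seq (le_trans _ (ler_prod _ (E1 := fun=> 1) _)) ?big1 // => z zrs.
  by rewrite ler01 ltW // (le_lt_trans c_ge1) // rs_large // inE zrs orbT.
rewrite normr_prod big_cons.
apply: (lt_le_trans (rs_large z0 (mem_head _ _))).
by rewrite (le_trans (ler_peMr _ rs_ge1)) ?ler_peMl ?mulr_ge0 ?prodr_ge0.
Qed.

Lemma primitive_Zpoly_const_factor_unit (f g h : {poly int}) :
  primitive_Zpoly f -> f = g * h -> (size g <= 1)%N -> g \is a GRing.unit.
Proof.
move=> primf defF sg.
have g0_dvd1 : (g`_0 %| \big[gcdz/0]_(i < size f) f`_i)%Z.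
  apply: (big_ind (fun x => g`_0 %| x)%Z) => // [x y|[i /= _] _].
    by move=> gx gy; rewrite dvdz_gcd gx gy.
  have -> : f`_i = g`_0 * h`_i by rewrite defF {1}(size1_polyC sg) coefCM.
  exact: dvdz_mulr.
have g0_unit : g`_0 \is a GRing.unit by move: g0_dvd1; rewrite primf dvdz1 => /eqP; lia.
rewrite poly_unitE g0_unit eqn_leq sg lt0n size_poly_eq0 andbT.
by apply: contraTneq g0_unit => ->; rewrite coef0 unitr0.
Qed.

Lemma prime_dvd_of_dvd_pexpM (p k d n : nat) :
  prime p -> (0 < d)%N -> (n %| p ^ k * d)%N -> (d < n)%N -> (p %| n)%N.
Proof.
move=> p_pr d_gt0 n_dvd d_lt_n; apply/negPn/negP => pNn.
have /(dvdn_leq d_gt0) : (n %| d)%N.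
  by rewrite -(@Gauss_dvdr _ (p ^ k)) // coprimeXr // coprime_sym prime_coprime.
by rewrite leqNgt d_lt_n.
Qed.

Lemma pexp_dvd_pexpM_le (p k d r : nat) :
  prime p -> ~~ (p %| d)%N -> (p ^ r %| p ^ k * d)%N -> (r <= k)%N.
Proof.
move=> p_pr pNd; rewrite Gauss_dvdl ?coprimeXl ?prime_coprime //.
by rewrite dvdn_Pexp2l ?prime_gt1.
Qed.

Lemma dvdz_coef_prod (p : int) (s : seq {poly int}) :
  (forall g, g \in s -> (p %| g`_0)%Z) ->
  (p ^+ size s %| (\prod_(g <- s) g)`_0)%Z /\
  (forall i, (i < size s)%N -> (p %| (\prod_(g <- s) g)`_i)%Z).
Proof.
elim: s => [|g s IHs] p_dvd; first by rewrite big_nil coefC /= expr0 dvd1z.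
have [IH0 IHi] := IHs (fun x xs => p_dvd x (@mem_behead _ (g :: s) _ xs)).
have p_dvd_g0 := p_dvd g (mem_head _ _).
rewrite big_cons; split; first by rewrite coef0M exprS dvdz_mul.
move=> i lt_i; rewrite coefM; apply: rpred_sum => -[[|l] /= lt_l] _.
  by rewrite dvdz_mulr.
by rewrite dvdz_mull // IHi //; rewrite /= in lt_i; lia.
Qed.

Definition nonunit_factorization (x : {poly int}) (s : seq {poly int}) : Prop :=
  {in s, forall g, g \isn't a GRing.unit} /\ x = \prod_(g <- s) g.

Lemma not_irreducible_split (x : {poly int}) :
  x != 0 -> x \isn't a GRing.unit -> ~ irreducible_Zpoly x ->
  exists a b, [/\ x = a * b, a \isn't a GRing.unit & b \isn't a GRing.unit].
Proof.
move=> x0 xNunit xNirr; apply: NNPP => no_split; apply: xNirr; split=> // a b xab.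
case: (boolP (a \is a GRing.unit)) => a_unit; first by left.
case: (boolP (b \is a GRing.unit)) => b_unit; first by right.
by case: no_split; exists a, b.
Qed.

(* If x = a * b with non-units a, b, a factorization of a extends by b to one
   of x, so factorizations of a (and likewise b) have length at most n - 1. *)
Lemma irreducible_factorization_of_bounded (x : {poly int}) (n : nat) :
  x != 0 -> x \isn't a GRing.unit ->
  (forall s, nonunit_factorization x s -> (size s <= n)%N) ->
  exists t : seq {poly int},
    {in t, forall g, irreducible_Zpoly g} /\ x = \prod_(g <- t) g.
Proof.
elim: n x => [|n IHn] x x0 xNunit bounded.
  suff /bounded : nonunit_factorization x [:: x] by [].
  by split; [move=> g; rewrite inE => /eqP-> | rewrite big_seq1].
case: (classic (irreducible_Zpoly x)) => [x_irr | xNirr].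
  by exists [:: x]; rewrite big_seq1; split=> // g; rewrite inE => /eqP->.
have [a [b [xab aNunit bNunit]]] := @not_irreducible_split x x0 xNunit xNirr.
have [a0 b0] : a != 0 /\ b != 0.
  by split; apply: contraNneq x0 => c0; rewrite xab c0 ?mul0r ?mulr0.
have [ta [ta_irr defa]] : exists ta : seq {poly int},
    {in ta, forall g, irreducible_Zpoly g} /\ a = \prod_(g <- ta) g.
  apply: IHn => // s [s_nonunit a_prod].
  have := bounded (rcons s b); rewrite size_rcons; apply; split.
    by move=> g; rewrite mem_rcons inE => /orP[/eqP-> | /s_nonunit].
  by rewrite -cats1 big_cat big_seq1 -a_prod.
have [tb [tb_irr defb]] : exists tb : seq {poly int},
    {in tb, forall g, irreducible_Zpoly g} /\ b = \prod_(g <- tb) g.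
  apply: IHn => // s [s_nonunit b_prod].
  have := bounded (a :: s); apply; split.
    by move=> g; rewrite inE => /orP[/eqP-> | /s_nonunit].
  by rewrite big_cons -b_prod.
exists (ta ++ tb); rewrite xab defa defb big_cat; split=> // g.
by rewrite mem_cat => /orP[/ta_irr | /tb_irr].
Qed.

Section LargeRootsFactorization.

Variables (f : {poly int}) (p k d : nat).
Hypotheses (primf : primitive_Zpoly f) (p_pr : prime p) (d_gt0 : (0 < d)%N).
Hypotheses (pNd : ~~ (p %| d)%N) (abs_f0 : absz f`_0 = (p ^ k * d)%N).
Hypothesis large_roots :
  forall z : algC, root (map_poly intr f) z -> d%:R < `|z|.

Lemma dvdz_coef0_nonunit_factor (g h : {poly int}) :
  f = g * h -> g \isn't a GRing.unit -> (p%:Z %| g`_0)%Z.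
Proof.
move=> fgh gNunit.
have sg : (1 < size g)%N.
  by rewrite ltnNge; apply: contra gNunit; apply: primitive_Zpoly_const_factor_unit fgh.
have : d%:R < `|(g`_0)%:~R : algC|.
  apply: norm_coef0_gt; rewrite ?ler1n // => z gz.
  by apply: large_roots; rewrite fgh rmorphM rootM gz.
rewrite -intr_norm -natr_absz ltr_nat => d_lt_g0.
rewrite dvdzE; apply: (@prime_dvd_of_dvd_pexpM p k d) d_lt_g0 => //.
by rewrite -abs_f0 fgh coef0M abszM dvdn_mulr.
Qed.

Lemma dvdz_coef_nonunit_factorization (s : seq {poly int}) :
  nonunit_factorization f s ->
  (p%:Z ^+ size s %| f`_0)%Z /\ (forall i, (i < size s)%N -> (p%:Z %| f`_i)%Z).
Proof.
move=> [s_nonunit defF]; rewrite defF; apply: dvdz_coef_prod => g gs.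
apply: (@dvdz_coef0_nonunit_factor g (\prod_(x <- rem g s) x)) (s_nonunit g gs).
by rewrite defF (big_rem _ gs).
Qed.

Lemma nonunit_factorization_size_le (j : nat) (s : seq {poly int}) :
  ~~ (p%:Z %| f`_j)%Z -> nonunit_factorization f s -> (size s <= minn k j)%N.
Proof.
move=> pNfj /dvdz_coef_nonunit_factorization[p_dvd_f0 p_dvd_fi].
rewrite leq_min; apply/andP; split.
  apply: pexp_dvd_pexpM_le pNd _ => //.
  by move: p_dvd_f0; rewrite dvdzE abszX abs_f0.
by rewrite leqNgt; apply: contra pNfj; apply: p_dvd_fi.
Qed.

End LargeRootsFactorization.

Theorem theorem2 (f : {poly int}) (m p k d j : nat) :
  (1 <= m)%N ->
  size f = m.+1 ->
  primitive_Zpoly f ->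
  prime p -> (0 < k)%N -> (0 < d)%N -> ~~ (p %| d)%N ->
  (f`_0 = (p ^ k * d)%N%:Z \/ f`_0 = - (p ^ k * d)%N%:Z) ->
  (forall z : algC, root (map_poly (intr : int -> algC) f) z -> d%:R < `|z|) ->
  (1 <= j <= m)%N -> ~~ ((p%:Z %| f`_j)%Z) ->
  prod_at_most_irr f (minn k j) /\
  ((k = 1%N \/ j = 1%N) -> irreducible_Zpoly f).
Proof.
move=> m_ge1 szf primf p_pr _ d_gt0 pNd f0E large_roots _ pNfj.
have abs_f0 : absz f`_0 = (p ^ k * d)%N by case: f0E => ->; rewrite ?abszN.
have bounded s : nonunit_factorization f s -> (size s <= minn k j)%N.
  exact: nonunit_factorization_size_le primf p_pr d_gt0 pNd abs_f0 large_roots j s pNfj.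
have f0 : f != 0 by rewrite -size_poly_eq0 szf.
have fNunit : f \isn't a GRing.unit by rewrite poly_unitE szf; case: (m) m_ge1.
have [t [t_irr deft]] := @irreducible_factorization_of_bounded f _ f0 fNunit bounded.
split.
  exists t; split=> //; apply: bounded; split=> //.
  by move=> g /t_irr[].
move=> kj1; split=> // a b fab.
apply: NNPP => /not_or_and[/negP aNunit /negP bNunit].
have : (size [:: a; b] <= minn k j)%N.
  apply: bounded; split; last by rewrite big_cons big_seq1.
  by move=> g; rewrite !inE => /orP[]/eqP->.
by case: kj1 => -> /=; lia.
Qed.
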